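(* Let $A_1,\dots,A_n$ be formulae built from variables other than $q$ using only $\cdot$, $\backslash$, $/$. For $i=1,\dots,n$ let $Z_i=([]^{-1}(!A_i\cdot\langle\rangle\langle\rangle q))/q$, and let $$\Phi = !((s/s)/!Z_1),\ !Z_1,\ \dots,\ !((s/s)/!Z_n),\ !Z_n,\ !((s/s)/\langle\rangle\langle\rangle q),\ [[q]].$$ Let $\mathcal{S}$ be either $\mathcal{F}^{\mathrm{mult}}_{2018}$ or $\mathcal{F}^{-,\mathrm{mult}}_{2018}$. Then $\Phi$ internalises $\{A_1,\dots,A_n\}$ in $\mathcal{S}$, that is: (1) the sequent $\Phi,s\to s$ is derivable in $\mathcal{S}$; (2) for every $i$, all sequences of tree terms $\Delta_1,\Delta_2$ and every formula $C$, if $\Phi,\Delta_1,A_i,\Delta_2\to C$ is derivable in $\mathcal{S}$ then so is $\Phi,\Delta_1,\Delta_2\to C$; (3) the sequent $!A_1,\dots,!A_n\to\prod\pi_q(\Phi)$ is derivable in $\mathcal{E}^{\mathrm{mult}}$.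
   Context: $s$ and $q$ are two fixed distinct variables. Formulae are built from a countable set of variables and $\mathbf1$ by $\backslash,/,\cdot$ and the unary $\langle\rangle$, $[]^{-1}$, $!$. Stoup-free bracketed calculus $\mathcal{F}^{\mathrm{mult}}_{2018}$: a tree term is a formula or $[\Xi]$ with $\Xi$ a meta-formula; a meta-formula is a finite sequence of tree terms (empty $\Lambda$); sequents $\Xi\to C$; $\Xi(\Theta)$ designates an occurrence of a meta-formula $\Theta$ which is $\Xi$ itself or the full content of some bracket $[\Theta]$ at any depth. Rules: axioms $A\to A$, $\Lambda\to\mathbf1$; ($/L$) from $\Gamma\to B$ and $\Xi(\Delta_1,C,\Delta_2)\to D$ infer $\Xi(\Delta_1,C/B,\Gamma,\Delta_2)\to D$; ($/R$) from $\Gamma,B\to C$ infer $\Gamma\to C/B$; ($\backslash L$) from $\Gamma\to A$ and $\Xi(\Delta_1,C,\Delta_2)\to D$ infer $\Xi(\Delta_1,\Gamma,A\backslash C,\Delta_2)\to D$; ($\backslash R$) from $A,\Gamma\to C$ infer $\Gamma\to A\backslash C$; ($\cdot L$) from $\Xi(\Delta_1,A,B,\Delta_2)\to D$ infer $\Xi(\Delta_1,A\cdot B,\Delta_2)\to D$; ($\cdot R$) from $\Delta\to A$ and $\Gamma\to B$ infer $\Delta,\Gamma\to A\cdot B$; ($\mathbf1L$) from $\Xi(\Delta_1,\Delta_2)\to A$ infer $\Xi(\Delta_1,\mathbf1,\Delta_2)\to A$; ($[]^{-1}L$) from $\Xi(\Delta_1,A,\Delta_2)\to B$ infer $\Xi(\Delta_1,[[]^{-1}A],\Delta_2)\to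 B$; ($[]^{-1}R$) from $[\Xi]\to A$ infer $\Xi\to[]^{-1}A$; ($\langle\rangle L$) from $\Xi(\Delta_1,[A],\Delta_2)\to B$ infer $\Xi(\Delta_1,\langle\rangle A,\Delta_2)\to B$; ($\langle\rangle R$) from $\Xi\to A$ infer $[\Xi]\to\langle\rangle A$; ($!L$) from $\Xi(\Delta_1,A,\Delta_2)\to C$ infer $\Xi(\Delta_1,!A,\Delta_2)\to C$; ($!P_1$) from $\Xi(\Delta_1,!A,\Phi,\Delta_2)\to C$ infer $\Xi(\Delta_1,\Phi,!A,\Delta_2)\to C$; ($!P_2$) the converse; ($!R$) from $!A\to B$ infer $!A\to!B$; ($!C$) from $\Xi(!A,\Gamma_1,[!A,\Gamma_2],\Gamma_3)\to C$ infer $\Xi(!A,\Gamma_1,[[\Gamma_2]],\Gamma_3)\to C$; (cut) from $\Pi\to A$ and $\Xi(\Gamma_1,A,\Gamma_2)\to C$ infer $\Xi(\Gamma_1,\Pi,\Gamma_2)\to C$. $\mathcal{F}^{-,\mathrm{mult}}_{2018}$ is $\mathcal{F}^{\mathrm{mult}}_{2018}$ restricted to formulae without $\mathbf1$, without $\Lambda\to\mathbf1$ and $\mathbf1L$, with $\backslash R,/R$ only if $\Gamma\neq\Lambda$ and $!C$ only if $\Gamma_2\neq\Lambda$. Bracket-free calculus $\mathcal{E}^{\mathrm{mult}}$: formulae without bracket modalities; sequents $\Pi\to A$, $\Pi$ a finite sequence of formulae; axioms $A\to A$, $\Lambda\to\mathbf1$; standard Lambek rules ($\backslash L$: from $\Pi\to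 A$ and $\Delta_1,B,\Delta_2\to C$ infer $\Delta_1,\Pi,A\backslash B,\Delta_2\to C$; $\backslash R$; $/L$: from $\Pi\to A$ and $\Delta_1,B,\Delta_2\to C$ infer $\Delta_1,B/A,\Pi,\Delta_2\to C$; $/R$; $\cdot L$; $\cdot R$; $\mathbf1L$); ($!R$) from $!A_1,\dots,!A_m\to B$ infer $!A_1,\dots,!A_m\to!B$ ($m\geq0$); ($!L$) from $\Delta_1,A,\Delta_2\to C$ infer $\Delta_1,!A,\Delta_2\to C$; ($!P_{1,2}$) permuting $!A$ with any sequence in either direction; ($!C$) from $\Delta_1,!A,!A,\Delta_2\to C$ infer $\Delta_1,!A,\Delta_2\to C$; ($!W$) from $\Delta_1,\Delta_2\to C$ infer $\Delta_1,!A,\Delta_2\to C$; (cut). The projection $\pi_q$ maps formulae by $\pi_q(q)=\mathbf1$, $\pi_q(p)=p$ for variables $p\ne q$, $\pi_q(\mathbf1)=\mathbf1$, commuting with $\backslash,/,\cdot,!$, and $\pi_q(\langle\rangle A)=\pi_q([]^{-1}A)=\pi_q(A)$; on meta-formulae it is applied elementwise and erases brackets. For a sequence $E_1,\dots,E_k$ of formulae, $\prod(E_1,\dots,E_k)=E_1\cdot\ldots\cdot E_k$. *)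

From Stdlib Require Import List Bool.
Import ListNotations.
Local Open Scope bool_scope.

(** Formulae of the bracketed calculi. Variables are natural numbers.
    [Under A C] is A\C, [Over C B] is C/B, [Dia A] is <>A,
    [BoxInv A] is []^{-1}A, [Bang A] is !A. *)
Inductive formula : Type :=
| Var (p : nat)
| One
| Under (A C : formula)
| Over (C B : formula)
| Prod (A B : formula)
| Dia (A : formula)
| BoxInv (A : formula)
| Bang (A : formula).

(** Tree terms: a formula, or a bracketed meta-formula [Xi]. *)
Inductive tterm : Type :=
| TF (A : formula)
| TB (l : list tterm).

Definition meta := list tterm.

(** Contexts Xi(_): the hole is either the whole meta-formula or the full
    content of some bracket, at any depth. *)
Inductive ctx : Type :=
| Hole
| InBr (l : meta) (c : ctx) (r : meta).

Fixpoint fill (c : ctx) (T : meta) : meta :=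
  match c with
  | Hole => T
  | InBr l c' r => l ++ TB (fill c' T) :: r
  end.

Fixpoint fonefree (A : formula) : bool :=
  match A with
  | Var _ => true
  | One => false
  | Under A C | Over A C | Prod A C => fonefree A && fonefree C
  | Dia A | BoxInv A | Bang A => fonefree A
  end.

Fixpoint tonefree (t : tterm) : bool :=
  match t with
  | TF A => fonefree A
  | TB l => (fix go (l : list tterm) : bool :=
               match l with
               | [] => true
               | x :: xs => tonefree x && go xs
               end) l
  end.

Definition monefree (l : meta) : bool := forallb tonefree l.

(** In the restricted calculus (m = true) every sequent must be 1-free. *)
Definition wf (m : bool) (G : meta) (C : formula) : Prop :=
  m = true -> monefree G = true /\ fonefree C = true.

(** Derivability in F^mult_2018 (m = false) and F^{-,mult}_2018 (m = true). *)
Inductive derF (m : bool) : meta -> formula -> Prop :=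
| F_ax A :
    wf m [TF A] A -> derF m [TF A] A
| F_one :
    m = false -> derF m [] One
| F_overL G B X D1 C D2 D :
    wf m (fill X (D1 ++ TF (Over C B) :: G ++ D2)) D ->
    derF m G B -> derF m (fill X (D1 ++ TF C :: D2)) D ->
    derF m (fill X (D1 ++ TF (Over C B) :: G ++ D2)) D
| F_overR G B C :
    wf m G (Over C B) -> (m = true -> G <> []) ->
    derF m (G ++ [TF B]) C -> derF m G (Over C B)
| F_underL G A X D1 C D2 D :
    wf m (fill X (D1 ++ G ++ TF (Under A C) :: D2)) D ->
    derF m G A -> derF m (fill X (D1 ++ TF C :: D2)) D ->
    derF m (fill X (D1 ++ G ++ TF (Under A C) :: D2)) D
| F_underR A G C :
    wf m G (Under A C) -> (m = true -> G <> []) ->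
    derF m (TF A :: G) C -> derF m G (Under A C)
| F_prodL X D1 A B D2 D :
    wf m (fill X (D1 ++ TF (Prod A B) :: D2)) D ->
    derF m (fill X (D1 ++ TF A :: TF B :: D2)) D ->
    derF m (fill X (D1 ++ TF (Prod A B) :: D2)) D
| F_prodR D G A B :
    wf m (D ++ G) (Prod A B) ->
    derF m D A -> derF m G B -> derF m (D ++ G) (Prod A B)
| F_oneL X D1 D2 A :
    m = false ->
    derF m (fill X (D1 ++ D2)) A -> derF m (fill X (D1 ++ TF One :: D2)) A
| F_boxinvL X D1 A D2 B :
    wf m (fill X (D1 ++ TB [TF (BoxInv A)] :: D2)) B ->
    derF m (fill X (D1 ++ TF A :: D2)) B ->
    derF m (fill X (D1 ++ TB [TF (BoxInv A)] :: D2)) B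
| F_boxinvR X A :
    wf m X (BoxInv A) ->
    derF m [TB X] A -> derF m X (BoxInv A)
| F_diaL X D1 A D2 B :
    wf m (fill X (D1 ++ TF (Dia A) :: D2)) B ->
    derF m (fill X (D1 ++ TB [TF A] :: D2)) B ->
    derF m (fill X (D1 ++ TF (Dia A) :: D2)) B
| F_diaR X A :
    wf m [TB X] (Dia A) ->
    derF m X A -> derF m [TB X] (Dia A)
| F_bangL X D1 A D2 C :
    wf m (fill X (D1 ++ TF (Bang A) :: D2)) C ->
    derF m (fill X (D1 ++ TF A :: D2)) C ->
    derF m (fill X (D1 ++ TF (Bang A) :: D2)) C
| F_bangP1 X D1 A P D2 C :
    wf m (fill X (D1 ++ P ++ TF (Bang A) :: D2)) C ->
    derF m (fill X (D1 ++ TF (Bang A) :: P ++ D2)) C ->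
    derF m (fill X (D1 ++ P ++ TF (Bang A) :: D2)) C
| F_bangP2 X D1 A P D2 C :
    wf m (fill X (D1 ++ TF (Bang A) :: P ++ D2)) C ->
    derF m (fill X (D1 ++ P ++ TF (Bang A) :: D2)) C ->
    derF m (fill X (D1 ++ TF (Bang A) :: P ++ D2)) C
| F_bangR A B :
    wf m [TF (Bang A)] (Bang B) ->
    derF m [TF (Bang A)] B -> derF m [TF (Bang A)] (Bang B)
| F_bangC X A G1 G2 G3 C :
    wf m (fill X (TF (Bang A) :: G1 ++ TB [TB G2] :: G3)) C ->
    (m = true -> G2 <> []) ->
    derF m (fill X (TF (Bang A) :: G1 ++ TB (TF (Bang A) :: G2) :: G3)) C ->
    derF m (fill X (TF (Bang A) :: G1 ++ TB [TB G2] :: G3)) C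
| F_cut P A X G1 G2 C :
    wf m (fill X (G1 ++ P ++ G2)) C ->
    derF m P A -> derF m (fill X (G1 ++ TF A :: G2)) C ->
    derF m (fill X (G1 ++ P ++ G2)) C.

Inductive eform : Type :=
| EVar (p : nat)
| EOne
| EUnder (A B : eform)
| EOver (B A : eform)
| EProd (A B : eform)
| EBang (A : eform).

Inductive derE : list eform -> eform -> Prop :=
| E_ax A : derE [A] A
| E_one : derE [] EOne
| E_underL P A D1 B D2 C :
    derE P A -> derE (D1 ++ B :: D2) C -> derE (D1 ++ P ++ EUnder A B :: D2) C
| E_underR A P B : derE (A :: P) B -> derE P (EUnder A B)
| E_overL P A D1 B D2 C :
    derE P A -> derE (D1 ++ B :: D2) C -> derE (D1 ++ EOver B A :: P ++ D2) C
| E_overR P A B : derE (P ++ [A]) B -> derE P (EOver B A)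
| E_prodL D1 A B D2 C :
    derE (D1 ++ A :: B :: D2) C -> derE (D1 ++ EProd A B :: D2) C
| E_prodR D G A B : derE D A -> derE G B -> derE (D ++ G) (EProd A B)
| E_oneL D1 D2 A : derE (D1 ++ D2) A -> derE (D1 ++ EOne :: D2) A
| E_bangR As B : derE (map EBang As) B -> derE (map EBang As) (EBang B)
| E_bangL D1 A D2 C : derE (D1 ++ A :: D2) C -> derE (D1 ++ EBang A :: D2) C
| E_bangP1 D1 A P D2 C :
    derE (D1 ++ EBang A :: P ++ D2) C -> derE (D1 ++ P ++ EBang A :: D2) C
| E_bangP2 D1 A P D2 C :
    derE (D1 ++ P ++ EBang A :: D2) C -> derE (D1 ++ EBang A :: P ++ D2) C
| E_bangC D1 A D2 C :
    derE (D1 ++ EBang A :: EBang A :: D2) C -> derE (D1 ++ EBang A :: D2) C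
| E_bangW D1 A D2 C : derE (D1 ++ D2) C -> derE (D1 ++ EBang A :: D2) C
| E_cut P A D1 D2 C :
    derE P A -> derE (D1 ++ A :: D2) C -> derE (D1 ++ P ++ D2) C.

Fixpoint piq (q : nat) (A : formula) : eform :=
  match A with
  | Var p => if Nat.eqb p q then EOne else EVar p
  | One => EOne
  | Under A C => EUnder (piq q A) (piq q C)
  | Over C B => EOver (piq q C) (piq q B)
  | Prod A B => EProd (piq q A) (piq q B)
  | Dia A => piq q A
  | BoxInv A => piq q A
  | Bang A => EBang (piq q A)
  end.

Fixpoint piq_tt (q : nat) (t : tterm) : list eform :=
  match t with
  | TF A => [piq q A]
  | TB l => (fix go (l : list tterm) : list eform :=
               match l with
               | [] => []
               | x :: xs => piq_tt q x ++ go xs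
               end) l
  end.

Definition piq_meta (q : nat) (l : meta) : list eform := concat (map (piq_tt q) l).

(** prod(E_1,...,E_k) = E_1 . (E_2 . ( ... . E_k)) (right-nested; k >= 1 in use). *)
Fixpoint eprod (l : list eform) : eform :=
  match l with
  | [] => EOne
  | [E] => E
  | E :: l' => EProd E (eprod l')
  end.

Inductive lambek_noq (q : nat) : formula -> Prop :=
| lq_var p : p <> q -> lambek_noq q (Var p)
| lq_prod A B : lambek_noq q A -> lambek_noq q B -> lambek_noq q (Prod A B)
| lq_under A B : lambek_noq q A -> lambek_noq q B -> lambek_noq q (Under A B)
| lq_over A B : lambek_noq q A -> lambek_noq q B -> lambek_noq q (Over A B).

Definition Zf (q : nat) (A : formula) : formula :=
  Over (BoxInv (Prod (Bang A) (Dia (Dia (Var q))))) (Var q).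

Definition Phi (s q : nat) (As : list formula) : meta :=
  concat (map (fun A => [TF (Bang (Over (Over (Var s) (Var s)) (Bang (Zf q A))));
                         TF (Bang (Zf q A))]) As)
  ++ [TF (Bang (Over (Over (Var s) (Var s)) (Dia (Dia (Var q)))));
      TB [TB [TF (Var q)]]].

(* The prefix Phi is an unlimited supply of the A_i.  By !-permutation a copy
   of !Z_i can be brought in front of the bracket [[q]]; !-contraction turns
   [[q]] into [!Z_i, q], which unfolds by /L, []^{-1}L and .L back to
   !A_i, <><>q and then, by <>L, to !A_i, [[q]]: the bracket is restored and a
   fresh !A_i is released, which is moved to any position and derelicted to A_i.
   For (1), each !((s/s)/W) consumes its neighbour W (with [[q]] -> <><>q by
   <>R) and leaves an identity s/s.  For (3), pi_q sends Z_i to (!A_i . 1)/1,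
   derivable from !A_i by !R, while each !((s/s)/W) is derivable from nothing. *)

From Stdlib Require Import List Bool Arith Btauto.
Import ListNotations.

Lemma tonefree_TB (l : meta) : tonefree (TB l) = monefree l.
Proof. induction l as [|t l IH]; [reflexivity|]. simpl. now rewrite <- IH. Qed.

Lemma monefree_fill (X : ctx) (T : meta) :
  monefree (fill X T) = monefree (fill X []) && monefree T.
Proof.
  unfold monefree. induction X as [|l X IH r]; [reflexivity|]. cbn [fill].
  rewrite !forallb_app. cbn [forallb]. rewrite !tonefree_TB. unfold monefree.
  rewrite IH. btauto.
Qed.

(* In the 1-free calculus every derivable sequent is 1-free, so the side
   condition [wf] of the rules used below follows from their premises. *)
Lemma derF_wf m G C : derF m G C -> wf m G C.
Proof. destruct 1; auto; intro; congruence. Qed.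

Ltac wf_of_premises :=
  let Hm := fresh in intro Hm;
  repeat match goal with
         | H : derF _ _ _ |- _ => apply derF_wf in H; specialize (H Hm)
         end;
  try rewrite monefree_fill in *; unfold monefree in *;
  repeat progress (rewrite ?forallb_app, ?tonefree_TB in *; unfold monefree in *;
                   cbn [forallb fonefree tonefree fill app] in *);
  rewrite ?andb_true_iff in *; intuition.

Lemma derF_ax m A : (m = true -> fonefree A = true) -> derF m [TF A] A.
Proof. intro HA. apply F_ax. intro Hm. simpl. rewrite (HA Hm). auto. Qed.

Lemma derF_var m p : derF m [TF (Var p)] (Var p).
Proof. now apply derF_ax. Qed.

Lemma derF_overL m G B X D1 C D2 D :
  derF m G B -> derF m (fill X (D1 ++ TF C :: D2)) D ->
  derF m (fill X (D1 ++ TF (Over C B) :: G ++ D2)) D.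
Proof. intros HG HC. apply F_overL; try assumption. wf_of_premises. Qed.

Lemma derF_prodL m X D1 A B D2 D :
  derF m (fill X (D1 ++ TF A :: TF B :: D2)) D ->
  derF m (fill X (D1 ++ TF (Prod A B) :: D2)) D.
Proof. intro H. apply F_prodL; try assumption. wf_of_premises. Qed.

Lemma derF_boxinvL m X D1 A D2 B :
  derF m (fill X (D1 ++ TF A :: D2)) B ->
  derF m (fill X (D1 ++ TB [TF (BoxInv A)] :: D2)) B.
Proof. intro H. apply F_boxinvL; try assumption. wf_of_premises. Qed.

Lemma derF_diaL m X D1 A D2 B :
  derF m (fill X (D1 ++ TB [TF A] :: D2)) B ->
  derF m (fill X (D1 ++ TF (Dia A) :: D2)) B.
Proof. intro H. apply F_diaL; try assumption. wf_of_premises. Qed.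

Lemma derF_diaR m X A : derF m X A -> derF m [TB X] (Dia A).
Proof. intro H. apply F_diaR; try assumption. wf_of_premises. Qed.

Lemma derF_bangL m X D1 A D2 C :
  derF m (fill X (D1 ++ TF A :: D2)) C ->
  derF m (fill X (D1 ++ TF (Bang A) :: D2)) C.
Proof. intro H. apply F_bangL; try assumption. wf_of_premises. Qed.

Lemma derF_bangP1 m X D1 A P D2 C :
  derF m (fill X (D1 ++ TF (Bang A) :: P ++ D2)) C ->
  derF m (fill X (D1 ++ P ++ TF (Bang A) :: D2)) C.
Proof. intro H. apply F_bangP1; try assumption. wf_of_premises. Qed.

Lemma derF_bangP2 m X D1 A P D2 C :
  derF m (fill X (D1 ++ P ++ TF (Bang A) :: D2)) C ->
  derF m (fill X (D1 ++ TF (Bang A) :: P ++ D2)) C.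
Proof. intro H. apply F_bangP2; try assumption. wf_of_premises. Qed.

Lemma derF_bangC m X A G1 G2 G3 C :
  (m = true -> G2 <> []) ->
  derF m (fill X (TF (Bang A) :: G1 ++ TB (TF (Bang A) :: G2) :: G3)) C ->
  derF m (fill X (TF (Bang A) :: G1 ++ TB [TB G2] :: G3)) C.
Proof. intros HG2 H. apply F_bangC; try assumption. wf_of_premises. Qed.

Lemma lambek_noq_onefree q A : lambek_noq q A -> fonefree A = true.
Proof. induction 1; simpl; rewrite ?IHlambek_noq1, ?IHlambek_noq2; reflexivity. Qed.

Lemma derF_cancel_bang_over m s W P R :
  derF m P W -> derF m R (Var s) ->
  derF m (TF (Bang (Over (Over (Var s) (Var s)) W)) :: P ++ R) (Var s).
Proof.
  intros HP HR.
  apply (derF_bangL m Hole []), (derF_overL m P W Hole [] _ R _ HP).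
  pose proof (derF_overL m R (Var s) Hole [] (Var s) [] _ HR (derF_var m s)) as Hs.
  now rewrite app_nil_r in Hs.
Qed.

Lemma derF_Phi_identity m s q As :
  Forall (lambek_noq q) As -> derF m (Phi s q As ++ [TF (Var s)]) (Var s).
Proof.
  induction 1 as [|A As HA _ IH].
  - apply (derF_cancel_bang_over m s _ [TB [TB [TF (Var q)]]] [TF (Var s)]).
    + do 2 apply derF_diaR. apply derF_var.
    + apply derF_var.
  - apply (derF_cancel_bang_over m s _ [TF (Bang (Zf q A))]); [|exact IH].
    apply derF_ax. intros _. simpl. now rewrite (lambek_noq_onefree q A HA).
Qed.

Lemma derF_bang_to_front m A G1 G2 C :
  derF m (G1 ++ TF (Bang A) :: G2) C <-> derF m (TF (Bang A) :: G1 ++ G2) C.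
Proof. split; [apply (derF_bangP2 m Hole []) | apply (derF_bangP1 m Hole [])]. Qed.

Lemma derF_bang_derelict_after m A P D1 D2 C :
  derF m (D1 ++ P ++ TF A :: D2) C -> derF m (D1 ++ TF (Bang A) :: P ++ D2) C.
Proof.
  intro H. apply (derF_bangP2 m Hole). cbn [fill]. rewrite app_assoc.
  apply (derF_bangL m Hole). cbn [fill]. now rewrite <- app_assoc.
Qed.

Lemma derF_diadiaL m D1 A D2 B :
  derF m (D1 ++ TB [TB [TF A]] :: D2) B -> derF m (D1 ++ TF (Dia (Dia A)) :: D2) B.
Proof. intro H. apply (derF_diaL m Hole), (derF_diaL m (InBr D1 Hole D2) []), H. Qed.

Lemma derF_absorb_front m q A G D1 D2 C :
  derF m (TF (Bang (Zf q A)) :: G ++ TB [TB [TF (Var q)]] :: D1 ++ TF A :: D2) C ->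
  derF m (TF (Bang (Zf q A)) :: G ++ TB [TB [TF (Var q)]] :: D1 ++ D2) C.
Proof.
  intro H.
  apply (derF_bangC m Hole); [discriminate |].
  apply (derF_bangL m (InBr (TF (Bang (Zf q A)) :: G) Hole (D1 ++ D2)) []).
  apply (derF_overL m [TF (Var q)] (Var q)
           (InBr (TF (Bang (Zf q A)) :: G) Hole (D1 ++ D2)) [] _ []);
    [apply derF_var |].
  apply (derF_boxinvL m Hole (TF (Bang (Zf q A)) :: G)).
  apply (derF_prodL m Hole).
  apply (derF_bang_derelict_after m A (TF (Dia (Dia (Var q))) :: D1)).
  apply derF_diadiaL, H.
Qed.

Lemma derF_bang_Z_absorbs m q A G1 G2 D1 D2 C :
  derF m (G1 ++ TF (Bang (Zf q A)) :: G2 ++ TB [TB [TF (Var q)]] :: D1 ++ TF A :: D2) C ->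
  derF m (G1 ++ TF (Bang (Zf q A)) :: G2 ++ TB [TB [TF (Var q)]] :: D1 ++ D2) C.
Proof. rewrite !derF_bang_to_front, !app_assoc. apply derF_absorb_front. Qed.

Lemma Phi_split s q As A :
  In A As -> exists G1 G2, forall R,
    Phi s q As ++ R = G1 ++ TF (Bang (Zf q A)) :: G2 ++ TB [TB [TF (Var q)]] :: R.
Proof.
  intro HA. destruct (in_split _ _ HA) as (As1 & As2 & ->).
  set (block A := [TF (Bang (Over (Over (Var s) (Var s)) (Bang (Zf q A)))); TF (Bang (Zf q A))]).
  exists (concat (map block As1) ++ [TF (Bang (Over (Over (Var s) (Var s)) (Bang (Zf q A))))]),
         (concat (map block As2) ++ [TF (Bang (Over (Over (Var s) (Var s)) (Dia (Dia (Var q)))))]).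
  intro R. unfold Phi. rewrite map_app, concat_app. now rewrite <- !app_assoc.
Qed.

Lemma eprod_cons E l : l <> [] -> eprod (E :: l) = EProd E (eprod l).
Proof. destruct l; [congruence | reflexivity]. Qed.

Lemma piq_meta_Phi_nonempty s q As : piq_meta q (Phi s q As) <> [].
Proof. destruct As; discriminate. Qed.

Lemma derE_bang_over_over S W : derE [W; S] S -> derE [] (EBang (EOver (EOver S S) W)).
Proof. intro H. apply (E_bangR []), E_overR, E_overR, H. Qed.

Lemma derE_bang_Zf q A : derE [EBang (piq q A)] (EBang (piq q (Zf q A))).
Proof.
  simpl. rewrite Nat.eqb_refl.
  apply (E_bangR [piq q A]), E_overR, (E_oneL [_] []), (E_prodR [_] []).
  - apply E_ax.
  - apply E_one.
Qed.

Lemma derE_Phi_projection s q As :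
  derE (map (fun A => EBang (piq q A)) As) (eprod (piq_meta q (Phi s q As))).
Proof.
  induction As as [|A As IH].
  - simpl. rewrite Nat.eqb_refl. apply (E_prodR [] []).
    + apply derE_bang_over_over, (E_oneL [] [_]), E_ax.
    + apply E_one.
  - change (piq_meta q (Phi s q (A :: As))) with
      (EBang (EOver (EOver (piq q (Var s)) (piq q (Var s))) (EBang (piq q (Zf q A))))
       :: EBang (piq q (Zf q A)) :: piq_meta q (Phi s q As)).
    rewrite !eprod_cons by (discriminate || apply piq_meta_Phi_nonempty).
    apply (E_prodR []).
    + apply derE_bang_over_over, (E_bangW [] _ [_]), E_ax.
    + apply (E_prodR [_]); [apply derE_bang_Zf | exact IH].
Qed.

Theorem proposition8 (s q : nat) (As : list formula) (m : bool) :
  s <> q ->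
  Forall (lambek_noq q) As ->
  derF m (Phi s q As ++ [TF (Var s)]) (Var s) /\
  (forall A, In A As ->
     forall (D1 D2 : meta) (C : formula),
       derF m (Phi s q As ++ D1 ++ TF A :: D2) C ->
       derF m (Phi s q As ++ D1 ++ D2) C) /\
  derE (map (fun A => EBang (piq q A)) As) (eprod (piq_meta q (Phi s q As))).
Proof.
  intros _ HAs. split; [|split].
  - apply derF_Phi_identity, HAs.
  - intros A HA D1 D2 C.
    destruct (Phi_split s q As A HA) as (G1 & G2 & HPhi).
    rewrite !HPhi. apply derF_bang_Z_absorbs.
  - apply derE_Phi_projection.
Qed.
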